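(* Let $\Lambda=\sum_{k=1}^K\lambda_k\delta_{\gamma_k}\in\mathcal{P}^2_K(X)$ and $\Gamma=m(\Lambda)$. Suppose that for some $L\ge K$ the $\rho$-projection $Q^*=T_L\Gamma=\sum_{\ell=1}^L\omega^*_\ell q^*_\ell$ exists and is unique, and let $\alpha\in\mathcal{A}_{L\to K}$. If $\Lambda$ is $4\eta(\alpha)$-separated, then for all $i,j\in[L]$: $\alpha(i)=\alpha(j)\iff\rho(q^*_i,q^*_j)\le\eta(\alpha)$, and $\alpha(i)\ne\alpha(j)\iff\rho(q^*_i,q^*_j)\ge2\eta(\alpha)$. Moreover, $\alpha$ can be recovered (up to relabeling of clusters) by single-linkage clustering on the distance matrix $D^*=(\rho(q^*_i,q^*_j))_{i,j=1}^L$.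
   Context: $(X,d)$ is a metric space, $\mathcal{P}(X)$ the regular Borel probability measures on $X$ with finite $r$-th moments, equipped with the Hellinger metric $\rho$; $\mathcal{P}^2_K(X)$ is the set of probability measures on $\mathcal{P}(X)$ with at most $K$ atoms; $m(\Lambda)=\sum_k\lambda_k\gamma_k$ for $\Lambda=\sum_k\lambda_k\delta_{\gamma_k}$. A base family $\mathfrak{Q}$ of mixing measures is fixed with $\mathfrak{Q}_L=\mathfrak{Q}\cap\mathcal{P}^2_L(X)$ and $\mathcal{M}(\mathfrak{Q}_L)=\{m(\Omega):\Omega\in\mathfrak{Q}_L\}$ identifiable for each $L$; $T_L\Gamma$ is the set of minimizers of $\rho(Q,\Gamma)$ over $Q\in\mathcal{M}(\mathfrak{Q}_L)$, and when unique its mixing measure is $\Omega^*=\sum_\ell\omega^*_\ell\delta_{q^*_\ell}$. $\mathcal{A}_{L\to K}$ is the set of maps $[L]\to[K]$. For $\alpha\in\mathcal{A}_{L\to K}$: $\bar\omega^*_k(\alpha)=\sum_{\ell\in\alpha^{-1}(k)}\omega^*_\ell$, $\Omega^*_k(\alpha)=\bar\omega^*_k(\alpha)^{-1}\sum_{\ell\in\alpha^{-1}(k)}\omega^*_\ell\delta_{q^*_\ell}$, $Q^*_k(\alpha)=m(\Omega^*_k(\alpha))$. The Hellinger diameter of a finitely supported $\Omega$ is $\Delta(\Omega)=\sup\{\rho(q,q'):q,q'\in\mathrm{conv}(\mathrm{supp}(\Omega))\}$ (convex hull in $\mathcal{P}(X)$). Define $\eta(\alpha)=\sup_k\Delta(\Omega^*_k(\alpha))+\sup_k\rho(\gamma_k,Q^*_k(\alpha))$.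 $\Lambda$ is $\delta$-separated if $\inf_{i\ne j}\rho(\gamma_i,\gamma_j)>\delta$. *)

From HB Require Import structures.
From mathcomp Require Import all_boot all_order all_algebra.
From mathcomp Require Import all_classical all_reals all_analysis.
Set Implicit Arguments.
Unset Strict Implicit.
Unset Printing Implicit Defensive.
Import Order.TTheory GRing.Theory Num.Theory.
Local Open Scope ring_scope.
Local Open Scope classical_set_scope.

Section Defs.
Context {d : measure_display} {X : measurableType d} {R : realType}.

Definition is_metric (dist : X -> X -> R) : Prop :=
  [/\ forall x y, 0 <= dist x y,
      forall x y, dist x y = 0 <-> x = y,
      forall x y, dist x y = dist y x &
      forall x y z, dist x z <= dist x y + dist y z].

Definition dopen (dist : X -> X -> R) (U : set X) : Prop :=
  forall x, U x -> exists2 e : R, 0 < e & forall y, dist x y < e -> U y.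

Definition is_borel (dist : X -> X -> R) : Prop :=
  forall A : set X, measurable A <-> <<s dopen dist >> A.

Definition borel_regular (dist : X -> X -> R) (p : measure X R) : Prop :=
  forall A, measurable A ->
    p A = ereal_inf [set p U | U in [set U | dopen dist U /\ A `<=` U]] /\
    p A = ereal_sup [set p F | F in [set F | dopen dist (~` F) /\ F `<=` A]].

Definition finite_moment (dist : X -> X -> R) (r : R) (p : measure X R) : Prop :=
  exists x0 : X, (\int[p]_x ((dist x0 x) `^ r)%:E < +oo)%E.

Definition PX (dist : X -> X -> R) (r : R) : set (measure X R) :=
  [set p : measure X R | p setT = 1%E /\ borel_regular dist p /\ finite_moment dist r p].

Definition meq (p q : measure X R) : Prop :=
  forall A, measurable A -> p A = q A.

Definition hellinger (p q : measure X R) : R :=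
  let nu : measure X R := measure_add p q in
  xget 0 [set v : R | exists f g : X -> R,
    [/\ measurable_fun setT f /\ measurable_fun setT g,
        (forall x, 0 <= f x) /\ (forall x, 0 <= g x),
        (forall A, measurable A -> p A = (\int[nu]_(x in A) (f x)%:E)%E),
        (forall A, measurable A -> q A = (\int[nu]_(x in A) (g x)%:E)%E) &
        v = Num.sqrt (fine (\int[nu]_x
              (((Num.sqrt (f x) - Num.sqrt (g x)) ^+ 2) / 2)%:E)%E)]].

(* ---------- finitely supported mixing measures  Sum_i w_i delta_{q_i} ---------- *)
Record mixing := Mixing {
  mx_n : nat ;
  mx_w : 'I_mx_n -> {nonneg R} ;
  mx_q : 'I_mx_n -> measure X R }.
Arguments mx_w : clear implicits.
Arguments mx_q : clear implicits.

Definition mx_valid (O : mixing) : Prop := \sum_(i < mx_n O) (mx_w O i)%:num = 1.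

Definition mixture (O : mixing) : measure X R :=
  msum (fun k => mscale (if insub k is Some i then mx_w O i else 0%:nng)
                        (if insub k is Some i then mx_q O i else mzero))
       (mx_n O).

(* two representations give the same measure on P(X) (atoms up to meq) *)
Definition mix_equiv (O O' : mixing) : Prop :=
  forall p : measure X R,
    \sum_(i < mx_n O | `[< meq (mx_q O i) p >]) (mx_w O i)%:num =
    \sum_(j < mx_n O' | `[< meq (mx_q O' j) p >]) (mx_w O' j)%:num.

Definition mx_supp (O : mixing) : set (measure X R) :=
  [set mx_q O i | i in [set i | (mx_w O i)%:num != 0]].

(* P^2_L(X): probability measures on P(X) with at most L atoms *)
Definition P2 (dist : X -> X -> R) (r : R) (L : nat) : set mixing :=
  [set O | [/\ mx_valid O, mx_supp O `<=` PX dist r &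
              exists O', mix_equiv O O' /\ (mx_n O' <= L)%N]].

Definition fam_L (dist : X -> X -> R) (r : R) (Q : set mixing) (L : nat) : set mixing :=
  Q `&` P2 dist r L.

Definition identifiable (dist : X -> X -> R) (r : R) (Q : set mixing) (L : nat) : Prop :=
  forall O O', fam_L dist r Q L O -> fam_L dist r Q L O' ->
    meq (mixture O) (mixture O') -> mix_equiv O O'.

Definition TL (dist : X -> X -> R) (r : R) (Q : set mixing) (L : nat)
    (Gamma : measure X R) : set (measure X R) :=
  [set P | exists O, [/\ fam_L dist r Q L O, P = mixture O &
     forall O', fam_L dist r Q L O' ->
       hellinger (mixture O) Gamma <= hellinger (mixture O') Gamma]].

Definition hconv (S : set (measure X R)) : set (measure X R) :=
  [set P | exists O, [/\ mx_valid O, (forall i, S (mx_q O i)) & P = mixture O]].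

Definition hdiam (O : mixing) : R :=
  sup [set hellinger pq.1 pq.2 | pq in hconv (mx_supp O) `*` hconv (mx_supp O)].

Definition barw (L K : nat) (alpha : 'I_L -> 'I_K) (w : 'I_L -> {nonneg R})
    (k : 'I_K) : R :=
  \sum_(l < L | alpha l == k) (w l)%:num.

Lemma barw_ge0 (L K : nat) (alpha : 'I_L -> 'I_K) (w : 'I_L -> {nonneg R})
    (k : 'I_K) : 0 <= barw alpha w k.
Proof. by apply: sumr_ge0 => l _. Qed.

Definition cluster (L K : nat) (alpha : 'I_L -> 'I_K) (w : 'I_L -> {nonneg R})
    (q : 'I_L -> measure X R) (k : 'I_K) : mixing :=
  @Mixing L (fun l => if alpha l == k
                      then NngNum (divr_ge0 (ge0 (w l)) (barw_ge0 alpha w k))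
                      else 0%:nng) q.

Definition Qk (L K : nat) (alpha : 'I_L -> 'I_K) (w : 'I_L -> {nonneg R})
    (q : 'I_L -> measure X R) (k : 'I_K) : measure X R :=
  mixture (cluster alpha w q k).

Definition eta_alpha (L K : nat) (alpha : 'I_L -> 'I_K) (w : 'I_L -> {nonneg R})
    (q : 'I_L -> measure X R) (gamma : 'I_K -> measure X R) : R :=
  \big[Num.max/0]_(k < K | [exists l, alpha l == k]) hdiam (cluster alpha w q k)
  + \big[Num.max/0]_(k < K | [exists l, alpha l == k])
        hellinger (gamma k) (Qk alpha w q k).

Definition delta_separated (K : nat) (gamma : 'I_K -> measure X R) (delta : R) : Prop :=
  forall i j : 'I_K, i != j -> delta < hellinger (gamma i) (gamma j).

End Defs.

(* single-linkage clustering of a distance matrix D, cut at height t: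
   i and j lie in the same cluster iff they are joined by a chain of
   pairs at distance <= t *)
Definition single_linkage {R : realType} (L : nat) (D : 'I_L -> 'I_L -> R) (t : R)
  : rel 'I_L := connect (fun i j => D i j <= t).

From Pilot Require Import Defs.
From HB Require Import structures.
From mathcomp Require Import all_boot all_order all_algebra.
From mathcomp Require Import all_classical all_reals all_analysis.
From mathcomp Require Import measurable_realfun.
From mathcomp Require Import ring lra.
Set Implicit Arguments.
Unset Strict Implicit.
Unset Printing Implicit Defensive.
Import Order.TTheory GRing.Theory Num.Theory.
Local Open Scope ring_scope.
Local Open Scope classical_set_scope.

(* Every q_i with alpha i = k, and also the cluster mixture Q_k, lies in the
   convex hull of the atoms of Omega*_k, so all their mutual Hellinger
   distances are at most Delta(Omega*_k), and Delta(Omega*_k) +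
   rho(gamma_k, Q_k) <= eta.  Hence rho(q_i, q_j) <= eta inside a cluster,
   while the triangle inequality through Q_(alpha i) and q_i gives
   rho(gamma_(alpha i), p) <= eta + rho(q_i, p); used twice, it yields
   4 eta < rho(gamma_k, gamma_k') <= 2 eta + rho(q_i, q_j) across clusters.
   So eta separates the two cases, and single linkage cut at eta recovers
   alpha.
   The triangle inequality for rho on finite measures is Minkowski's
   inequality in L^2, once rho is computed from densities with respect to a
   common dominating measure. *)

Section density.
Context {d : measure_display} {X : measurableType d} {R : realType}.
Local Open Scope ereal_scope.
Implicit Types (mu nu a b : measure X R) (F G : X -> R).

Definition is_density mu nu F : Prop :=
  [/\ measurable_fun setT F, forall x, (0 <= F x)%R &
      forall A, measurable A -> nu A = \int[mu]_(x in A) (F x)%:E].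

Lemma is_density_ext mu mu' nu nu' F : meq mu mu' -> meq nu nu' ->
  is_density mu nu F -> is_density mu' nu' F.
Proof.
move=> mumu' nunu' [mF F0 FE]; split=> // A mA.
by rewrite -nunu' // FE //; apply: eq_measure_integral => B mB _; rewrite mumu'.
Qed.

Lemma le_measure_dominates mu nu : (forall A, nu A <= mu A) -> nu `<< mu.
Proof.
move=> numu; apply/null_content_dominatesP => A mA muA0.
by apply/eqP; rewrite eq_le measure_ge0 andbT -muA0 numu.
Qed.

(* [mfrestr measurableT] gives a measure of finite total mass the finite-measure
   structure that the Radon-Nikodym theorem of the library expects. *)
Lemma mfrestrTE mu (muoo : mu setT < +oo) : meq (mfrestr measurableT muoo) mu.
Proof. by move=> A _ /=; rewrite /mfrestr /mrestr setIT. Qed.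

Lemma mfrestrT_dominates mu nu (muoo : mu setT < +oo) (nuoo : nu setT < +oo) :
  nu `<< mu -> mfrestr measurableT nuoo `<< mfrestr measurableT muoo.
Proof.
move=> /null_content_dominatesP numu; apply/null_content_dominatesP => A mA.
by rewrite /= /mfrestr /mrestr !setIT; exact: numu.
Qed.

Arguments mfrestrTE {mu} muoo.
Arguments mfrestrT_dominates {mu nu} muoo nuoo.

Lemma density_exists mu nu : mu setT < +oo -> nu setT < +oo -> nu `<< mu ->
  exists F, is_density mu nu F.
Proof.
move=> muoo nuoo numu.
have := radon_nikodym_sigma_finite (mfrestrT_dominates muoo nuoo numu).
move=> [f [f0 ffin fint fE]].
exists (fine \o f); split.
- exact: measurableT_comp (fine_measurable measurableT) (measurable_int _ fint).
- by move=> x; apply: fine_ge0.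
- move=> A mA; rewrite -(mfrestrTE nuoo A mA).
  etransitivity; first exact: fE.
  transitivity (\int[mu]_(x in A) f x).
    by apply: eq_measure_integral => B mB _; exact: mfrestrTE.
  by apply: eq_integral => x _; rewrite fineK.
Qed.

Lemma density_integrable mu nu F : nu setT < +oo -> is_density mu nu F ->
  mu.-integrable setT (EFin \o F).
Proof.
move=> nuoo [mF F0 FE]; apply/integrableP; split; first exact/measurable_EFinP.
under eq_integral do rewrite /comp gee0_abs ?lee_fin //.
by rewrite -FE.
Qed.

Lemma density_ae_eq mu nu F G : nu setT < +oo ->
  is_density mu nu F -> is_density mu nu G -> ae_eq mu setT (EFin \o F) (EFin \o G).
Proof.
move=> nuoo dF [mG G0 GE]; apply: integral_ae_eq => //.
- exact: density_integrable dF.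
- exact/measurable_EFinP.
- by move=> E _ mE; case: dF => _ _ <- //; rewrite -GE.
Qed.

Lemma density_dominates mu nu F : is_density mu nu F -> nu `<< mu.
Proof.
move=> [mF _ FE]; apply/null_content_dominatesP => A mA muA0.
by rewrite FE // null_set_integral //; apply/measurable_funTS/measurable_EFinP.
Qed.

(* F agrees a.e. with the library's Radon-Nikodym derivative, for which the
   change of variables is available. *)
Lemma integral_density mu nu F : mu setT < +oo -> nu setT < +oo ->
  is_density mu nu F ->
  forall (f : X -> \bar R) E, (forall x, 0 <= f x) -> measurable E ->
    measurable_fun E f ->
  \int[mu]_(x in E) (f x * (F x)%:E) = \int[nu]_(x in E) f x.
Proof.
move=> muoo nuoo dF f E f0 mE mf; have [mF F0 FE] := dF.
have numu := mfrestrT_dominates muoo nuoo (density_dominates dF).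
pose G :=
  Radon_Nikodym_SigmaFinite.f (mfrestr measurableT nuoo) (mfrestr measurableT muoo).
have mG : measurable_fun setT G.
  exact: measurable_int (Radon_Nikodym_SigmaFinite.f_integrable numu).
have FG : ae_eq (mfrestr measurableT muoo) setT (EFin \o F) G.
  apply: ae_eq_sym; apply: integral_ae_eq => //.
  - exact: Radon_Nikodym_SigmaFinite.f_integrable.
  - exact/measurable_EFinP.
  - move=> A _ mA.
    rewrite -Radon_Nikodym_SigmaFinite.f_integral // mfrestrTE // FE //.
    by apply: eq_measure_integral => B mB _; exact/esym/mfrestrTE.
transitivity (\int[mfrestr measurableT muoo]_(x in E) (f x * (F x)%:E)).
  by apply: eq_measure_integral => B mB _; exact/esym/mfrestrTE.
transitivity (\int[mfrestr measurableT muoo]_(x in E) (f x * G x)).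
  apply: ge0_ae_eq_integral => //.
  - by apply: emeasurable_funM => //; apply/measurable_funTS/measurable_EFinP.
  - by apply: emeasurable_funM => //; exact: measurable_funTS.
  - by move=> x _; rewrite mule_ge0 ?lee_fin.
  - by move=> x _; rewrite mule_ge0 // Radon_Nikodym_SigmaFinite.f_ge0.
  - by apply: filterS FG => x + _ => /(_ I) /= ->.
rewrite Radon_Nikodym_SigmaFinite.change_of_variables //.
by apply: eq_measure_integral => B mB _; exact: mfrestrTE.
Qed.

Lemma is_densityD mu a b F G : is_density mu a F -> is_density mu b G ->
  is_density mu (measure_add a b) (F \+ G)%R.
Proof.
move=> [mF F0 FE] [mG G0 GE]; split.
- exact: measurable_funD.
- by move=> x; rewrite addr_ge0.
- move=> A mA; rewrite [LHS]measure_addE FE // GE //.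
  under [RHS]eq_integral do rewrite EFinD.
  rewrite ge0_integralD //; do ?by move=> x _; rewrite lee_fin.
  + exact/measurable_funTS/measurable_EFinP.
  + exact/measurable_funTS/measurable_EFinP.
Qed.

Lemma is_densityM mu nu a F G : mu setT < +oo -> nu setT < +oo ->
  is_density mu nu G -> is_density nu a F -> is_density mu a (F \* G)%R.
Proof.
move=> muoo nuoo dG [mF F0 FE]; have [mG G0 _] := dG; split.
- exact: measurable_funM.
- by move=> x; rewrite mulr_ge0.
- move=> A mA; rewrite FE // -(integral_density muoo nuoo dG) //.
  exact/measurable_funTS/measurable_EFinP.
Qed.

End density.

Section hellinger_integrand.
Context {d : measure_display} {X : measurableType d} {R : realType}.
Implicit Types (f g S : X -> R).

Definition hellinger_integrand f g x : R :=
  (Num.sqrt (f x) - Num.sqrt (g x)) ^+ 2 / 2.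

Lemma hellinger_integrand_ge0 f g x : 0 <= hellinger_integrand f g x.
Proof. by rewrite mulr_ge0 ?sqr_ge0 ?invr_ge0. Qed.

Lemma hellinger_integrandC f g x :
  hellinger_integrand f g x = hellinger_integrand g f x.
Proof. by rewrite /hellinger_integrand -sqrrN opprB. Qed.

Lemma hellinger_integrand_le f g x : 0 <= f x -> 0 <= g x ->
  hellinger_integrand f g x <= f x + g x.
Proof.
move=> f0 g0; rewrite /hellinger_integrand.
have := sqrtr_ge0 (f x); have := sqrtr_ge0 (g x).
set a := Num.sqrt (f x); set b := Num.sqrt (g x) => b0 a0.
rewrite -[f x](sqr_sqrtr f0) -[g x](sqr_sqrtr g0) -/a -/b.
rewrite ler_pdivrMr //; nra.
Qed.

Lemma le_hellinger_integrand f g x : 0 <= f x -> 0 <= g x ->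
  f x <= 4 * hellinger_integrand f g x + 2 * g x.
Proof.
move=> f0 g0; rewrite /hellinger_integrand.
set a := Num.sqrt (f x); set b := Num.sqrt (g x).
rewrite -[f x](sqr_sqrtr f0) -[g x](sqr_sqrtr g0) -/a -/b.
have -> : 4 * ((a - b) ^+ 2 / 2) = 2 * (a - b) ^+ 2 by field.
have := sqr_ge0 (a - 2 * b); nra.
Qed.

Lemma hellinger_integrandM f g S x : 0 <= f x -> 0 <= g x -> 0 <= S x ->
  hellinger_integrand f g x * S x = hellinger_integrand (f \* S) (g \* S) x.
Proof.
move=> f0 g0 S0; rewrite /hellinger_integrand /= !sqrtrM //.
by rewrite -[in LHS](sqr_sqrtr S0); ring.
Qed.

Definition hellinger_diff f g x : R := (Num.sqrt (f x) - Num.sqrt (g x)) / Num.sqrt 2.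

Lemma hellinger_diff_sqr f g x :
  hellinger_diff f g x ^+ 2 = hellinger_integrand f g x.
Proof. by rewrite expr_div_n sqr_sqrtr. Qed.

Lemma hellinger_diffD f g h :
  hellinger_diff f h = (hellinger_diff f g \+ hellinger_diff g h)%R.
Proof. by apply/funext => x; rewrite /hellinger_diff /= -mulrDl addrA subrK. Qed.

Lemma measurable_hellinger_diff f g :
  measurable_fun setT f -> measurable_fun setT g ->
  measurable_fun setT (hellinger_diff f g).
Proof.
move=> mf mg; apply: measurable_funM => //.
have msqrt := continuous_measurable_fun (@sqrt_continuous R).
by apply: measurable_funB; exact: measurableT_comp.
Qed.

Lemma measurable_hellinger_integrand f g :
  measurable_fun setT f -> measurable_fun setT g ->
  measurable_fun setT (hellinger_integrand f g).
Proof.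
move=> mf mg.
rewrite (_ : hellinger_integrand f g = fun x => hellinger_diff f g x ^+ 2).
  apply: (@measurable_funX _ _ _ _ (hellinger_diff f g)).
  exact: measurable_hellinger_diff.
by apply/funext => x; rewrite hellinger_diff_sqr.
Qed.

End hellinger_integrand.

Section hellinger.
Context {d : measure_display} {X : measurableType d} {R : realType}.
Local Open Scope ereal_scope.
Implicit Types (mu nu p q a b c : measure X R) (f g F G H : X -> R).

Definition hellinger_dens mu f g : R :=
  Num.sqrt (fine (\int[mu]_x (hellinger_integrand f g x)%:E)).

(* [hellinger] picks one of these values with [xget]; by [hellinger_density]
   they all coincide for finite measures. *)
Definition hellinger_values p q : set R :=
  [set v | exists f g, [/\ is_density (measure_add p q) p f,
     is_density (measure_add p q) q g & v = hellinger_dens (measure_add p q) f g]].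

Lemma hellingerE p q : hellinger p q = xget 0%R (hellinger_values p q).
Proof.
rewrite /hellinger; congr xget; apply/seteqP; split=> v.
- by move=> [f [g [[mf mg] [f0 g0] fE gE ->]]]; exists f, g.
- by move=> [f [g [[mf f0 fE] [mg g0 gE] ->]]]; exists f, g.
Qed.

Lemma hellinger_ge0 p q : (0 <= hellinger p q)%R.
Proof.
by rewrite hellingerE; case: xgetP => // v _ [f [g [_ _ ->]]]; exact: sqrtr_ge0.
Qed.

Lemma hellinger_dens_ext mu nu f g : meq mu nu ->
  hellinger_dens mu f g = hellinger_dens nu f g.
Proof.
move=> munu; rewrite /hellinger_dens (eq_measure_integral nu) // => A mA _.
by rewrite munu.
Qed.

Lemma meq_measure_add p q p' q' : meq p p' -> meq q q' ->
  meq (measure_add p q) (measure_add p' q').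
Proof.
by move=> pp' qq' A mA; rewrite [LHS]measure_addE [RHS]measure_addE pp' ?qq'.
Qed.

Lemma hellinger_values_ext p q p' q' : meq p p' -> meq q q' ->
  hellinger_values p q `<=` hellinger_values p' q'.
Proof.
move=> pp' qq' v [f [g [df dg ->]]]; have pq := meq_measure_add pp' qq'.
exists f, g; split; [exact: is_density_ext df|exact: is_density_ext dg|].
exact: hellinger_dens_ext.
Qed.

Lemma hellinger_ext p q p' q' : meq p p' -> meq q q' ->
  hellinger p q = hellinger p' q'.
Proof.
move=> pp' qq'; have p'p : meq p' p by move=> A mA; rewrite pp'.
have q'q : meq q' q by move=> A mA; rewrite qq'.
rewrite !hellingerE; congr xget; apply/seteqP; split; exact: hellinger_values_ext.
Qed.

Lemma hellinger_values_sym p q : hellinger_values p q `<=` hellinger_values q p.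
Proof.
have pq : meq (measure_add p q) (measure_add q p).
  by move=> A mA; rewrite [LHS]measure_addE [RHS]measure_addE addeC.
move=> v [f [g [df dg ->]]]; exists g, f; split.
- exact: is_density_ext dg.
- exact: is_density_ext df.
- rewrite (hellinger_dens_ext _ _ pq) /hellinger_dens.
  by under eq_integral do rewrite hellinger_integrandC.
Qed.

Lemma hellingerC p q : hellinger p q = hellinger q p.
Proof.
by rewrite !hellingerE; congr xget; apply/seteqP; split; exact: hellinger_values_sym.
Qed.

Lemma integral_hellinger_integrand_le mu a b F G :
  is_density mu a F -> is_density mu b G ->
  \int[mu]_x (hellinger_integrand F G x)%:E <= a setT + b setT.
Proof.
move=> [mF F0 FE] [mG G0 GE]; rewrite FE // GE //.
rewrite -ge0_integralD //; do ?by move=> x _; rewrite lee_fin.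
- apply: ge0_le_integral => //.
  + by move=> x _; rewrite lee_fin hellinger_integrand_ge0.
  + exact/measurable_EFinP/measurable_hellinger_integrand.
  + by apply/measurable_EFinP/measurable_funD.
  + by move=> x _; rewrite -EFinD lee_fin hellinger_integrand_le.
- exact/measurable_EFinP.
- exact/measurable_EFinP.
Qed.

Lemma hellinger_le_sqrt p q (x y : R) : p setT = x%:E -> q setT = y%:E ->
  (hellinger p q <= Num.sqrt (x + y))%R.
Proof.
move=> px qy; rewrite hellingerE; case: xgetP => [v _ [f [g [df dg ->]]]|_];
  last exact: sqrtr_ge0.
have x0 : (0 <= x)%R by rewrite -lee_fin -px measure_ge0.
have y0 : (0 <= y)%R by rewrite -lee_fin -qy measure_ge0.
have I0 : 0 <= \int[measure_add p q]_z (hellinger_integrand f g z)%:E.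
  by apply: integral_ge0 => z _; rewrite lee_fin hellinger_integrand_ge0.
have Ile := integral_hellinger_integrand_le df dg; rewrite px qy -EFinD in Ile.
rewrite ler_sqrt ?addr_ge0 // -lee_fin fineK //.
by rewrite ge0_fin_numE // (le_lt_trans Ile) ?ltry.
Qed.

Lemma le_integral_hellinger_integrand mu a b F G :
  is_density mu a F -> is_density mu b G ->
  a setT <= 4%:E * \int[mu]_x (hellinger_integrand F G x)%:E + 2%:E * b setT.
Proof.
move=> [mF F0 FE] [mG G0 GE]; rewrite FE // GE //.
have mh := measurable_hellinger_integrand mF mG.
have mhE : measurable_fun setT (fun x => (hellinger_integrand F G x)%:E).
  exact/measurable_EFinP.
have mGE : measurable_fun setT (fun x => (G x)%:E) by exact/measurable_EFinP.
rewrite -ge0_integralZl_EFin // => [|x _];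
  last by rewrite lee_fin hellinger_integrand_ge0.
rewrite -ge0_integralZl_EFin // => [|x _]; last by rewrite lee_fin.
rewrite -ge0_integralD //; first last.
- exact: emeasurable_funM.
- by move=> x _; rewrite mule_ge0 ?lee_fin.
- exact: emeasurable_funM.
- by move=> x _; rewrite mule_ge0 ?lee_fin ?hellinger_integrand_ge0.
apply: ge0_le_integral => //.
- by move=> x _; rewrite lee_fin.
- exact/measurable_EFinP.
- by apply: emeasurable_funD; exact: emeasurable_funM.
- by move=> x _; rewrite -!EFinM -EFinD lee_fin le_hellinger_integrand.
Qed.

(* A junk value: the integral is infinite and [fine] sends it to 0. *)
Lemma hellinger_pinfty p q : p setT = +oo -> q setT < +oo -> hellinger p q = 0%R.
Proof.
move=> poo qoo; rewrite hellingerE; case: xgetP => // v _ [f [g [df dg ->]]].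
have := le_integral_hellinger_integrand df dg.
have qfin : q setT \is a fin_num by rewrite ge0_fin_numE ?measure_ge0.
rewrite poo -(fineK qfin) /hellinger_dens.
have : 0 <= \int[measure_add p q]_x (hellinger_integrand f g x)%:E.
  by apply: integral_ge0 => x _; rewrite lee_fin hellinger_integrand_ge0.
by case: (\int[_]_x _) => [r _|_ _|//]; rewrite ?leye_eq //= sqrtr0.
Qed.

Lemma hellinger_values_nonempty p q : p setT < +oo -> q setT < +oo ->
  hellinger_values p q !=set0.
Proof.
move=> poo qoo; set nu := measure_add p q.
have nuoo : nu setT < +oo by rewrite /nu measure_addE lte_add_pinfty.
have [f df] : exists f, is_density nu p f.
  apply: density_exists => //; apply: le_measure_dominates => A.
  by rewrite [leRHS]measure_addE leeDl.
have [g dg] : exists g, is_density nu q g.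
  apply: density_exists => //; apply: le_measure_dominates => A.
  by rewrite [leRHS]measure_addE leeDr.
by exists (hellinger_dens nu f g), f, g.
Qed.

Lemma hellinger_density mu a b F G :
  mu setT < +oo -> a setT < +oo -> b setT < +oo ->
  is_density mu a F -> is_density mu b G -> hellinger a b = hellinger_dens mu F G.
Proof.
move=> muoo aoo boo dF dG; set nu := measure_add a b.
have nuoo : nu setT < +oo by rewrite /nu measure_addE lte_add_pinfty.
have dS := is_densityD dF dG; have [mS S0 _] := dS.
rewrite hellingerE; case: xgetP => [v _ [f [g [df dg ->]]]|none]; last first.
  by have [v hv] := hellinger_values_nonempty aoo boo; case: (none v).
have [mf f0 _] := df; have [mg g0 _] := dg.
have [mF F0 _] := dF; have [mG G0 _] := dG.
have fS := density_ae_eq aoo (is_densityM muoo nuoo dS df) dF.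
have gS := density_ae_eq boo (is_densityM muoo nuoo dS dg) dG.
rewrite /hellinger_dens -(integral_density muoo nuoo dS) //; first last.
- exact/measurable_EFinP/measurable_hellinger_integrand.
- by move=> x; rewrite lee_fin hellinger_integrand_ge0.
congr (Num.sqrt (fine _)); apply: ge0_ae_eq_integral => //.
- apply: emeasurable_funM; apply/measurable_EFinP => //.
  exact: measurable_hellinger_integrand.
- exact/measurable_EFinP/measurable_hellinger_integrand.
- by move=> x _; rewrite mule_ge0 ?lee_fin ?hellinger_integrand_ge0.
- by move=> x _; rewrite lee_fin hellinger_integrand_ge0.
apply: filterS2 fS gS => x /(_ I) [fSF] /(_ I) [gSG] _.
by rewrite -EFinM hellinger_integrandM // /hellinger_integrand /= fSF gSG.
Qed.

Lemma Lnorm2_sqrt mu (u : X -> R) (I : R) : (0 <= I)%R ->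
  \int[mu]_x (u x ^+ 2)%:E = I%:E -> 'N[mu]_2%:E[EFin \o u] = (Num.sqrt I)%:E.
Proof.
move=> I0 uI; rewrite unlock /=.
under eq_integral do rewrite powR_mulrn // real_normK ?num_real //.
by rewrite uI poweR_EFin powR12_sqrt.
Qed.

Lemma Lnorm2_hellinger_diff mu a b F G : a setT < +oo -> b setT < +oo ->
  is_density mu a F -> is_density mu b G ->
  'N[mu]_2%:E[EFin \o hellinger_diff F G] = (hellinger_dens mu F G)%:E.
Proof.
move=> aoo boo dF dG.
have I0 : 0 <= \int[mu]_x (hellinger_integrand F G x)%:E.
  by apply: integral_ge0 => x _; rewrite lee_fin hellinger_integrand_ge0.
apply: Lnorm2_sqrt; first exact: fine_ge0.
under eq_integral do rewrite hellinger_diff_sqr.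
rewrite fineK // ge0_fin_numE //.
by rewrite (le_lt_trans (integral_hellinger_integrand_le dF dG)) ?lte_add_pinfty.
Qed.

Lemma hellinger_dens_triangle mu a b c F G H :
  a setT < +oo -> b setT < +oo -> c setT < +oo ->
  is_density mu a F -> is_density mu b G -> is_density mu c H ->
  (hellinger_dens mu F H <= hellinger_dens mu F G + hellinger_dens mu G H)%R.
Proof.
move=> aoo boo coo dF dG dH.
have [mF _ _] := dF; have [mG _ _] := dG; have [mH _ _] := dH.
rewrite -lee_fin EFinD -(Lnorm2_hellinger_diff aoo coo dF dH).
rewrite -(Lnorm2_hellinger_diff aoo boo dF dG) -(Lnorm2_hellinger_diff boo coo dG dH).
rewrite (hellinger_diffD _ G).
by apply: minkowski_EFin; rewrite ?ler1n //; exact: measurable_hellinger_diff.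
Qed.

Lemma hellinger_triangle a b c :
  a setT < +oo -> b setT < +oo -> c setT < +oo ->
  (hellinger a c <= hellinger a b + hellinger b c)%R.
Proof.
move=> aoo boo coo; set mu := measure_add (measure_add a b) c.
have muE A : mu A = a A + b A + c A.
  by rewrite /mu measure_addE; congr (_ + _); exact: measure_addE.
have muoo : mu setT < +oo by rewrite muE !lte_add_pinfty.
have le_mu A : [/\ a A <= mu A, b A <= mu A & c A <= mu A].
  rewrite muE -addeA; split; last by rewrite addeA leeDr // adde_ge0.
    by rewrite leeDl // adde_ge0.
  by rewrite addeCA leeDl // adde_ge0.
have [Fa dFa] : exists F, is_density mu a F.
  by apply: density_exists => //; apply: le_measure_dominates => A; case: (le_mu A).
have [Fb dFb] : exists F, is_density mu b F.
  by apply: density_exists => //; apply: le_measure_dominates => A; case: (le_mu A).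
have [Fc dFc] : exists F, is_density mu c F.
  by apply: density_exists => //; apply: le_measure_dominates => A; case: (le_mu A).
rewrite (hellinger_density muoo aoo coo dFa dFc).
rewrite (hellinger_density muoo aoo boo dFa dFb).
rewrite (hellinger_density muoo boo coo dFb dFc).
exact: hellinger_dens_triangle dFa dFb dFc.
Qed.

End hellinger.

Section mixture.
Context {d : measure_display} {X : measurableType d} {R : realType}.
Implicit Types (O : @mixing d X R) (S : set (measure X R)) (p : measure X R).

Lemma mixtureE O A :
  mixture O A = (\sum_(i < mx_n O) (mx_w i)%:num%:E * mx_q i A)%E.
Proof. by apply: eq_bigr => i _; rewrite /mscale valK. Qed.

Lemma mixture_setT O : (forall i : 'I_(mx_n O), mx_q i setT = 1%E) ->
  mixture O setT = (\sum_(i < mx_n O) (mx_w i)%:num)%:E.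
Proof.
by move=> O1; rewrite mixtureE -sumEFin; apply: eq_bigr => i _; rewrite O1 mule1.
Qed.

Lemma hconv_prob S P : (forall p, S p -> p setT = 1%E) -> hconv S P ->
  P setT = 1%E.
Proof. by move=> S1 [M [M1 MS ->]]; rewrite mixture_setT ?M1 // => i; exact: S1. Qed.

Lemma hellinger_le_hdiam O P P' : (forall p, mx_supp O p -> p setT = 1%E) ->
  hconv (mx_supp O) P -> hconv (mx_supp O) P' -> hellinger P P' <= hdiam O.
Proof.
move=> O1 hP hP'; apply: sup_upper_bound; last by exists (P, P').
split; first by exists (hellinger P P'), (P, P').
exists (Num.sqrt (1 + 1)) => _ [[p p'] [/= hp hp'] <-].
by apply: hellinger_le_sqrt; exact: hconv_prob O1 _.
Qed.

Definition mixing1 p : @mixing d X R :=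
  @Mixing _ _ _ 1 (fun _ => 1%:nng) (fun _ => p).

Lemma mixing1E p : meq (mixture (mixing1 p)) p.
Proof. by move=> A _; rewrite mixtureE big_ord1 mul1e. Qed.

Lemma hconv_mixing1 S p : S p -> hconv S (mixture (mixing1 p)).
Proof. by exists (mixing1 p); split=> //; rewrite /mx_valid big_ord1. Qed.

Lemma mixing_atom O : mx_valid O -> exists i : 'I_(mx_n O), (mx_w i)%:num != 0.
Proof.
move=> O1; apply/existsP; apply: contraT; rewrite negb_exists => /forallP O0.
move: O1; rewrite /mx_valid big1 => [/esym/eqP|i _]; first by rewrite oner_eq0.
by apply/eqP; have := O0 i; rewrite negbK.
Qed.

Lemma mx_supp_prob (dist : X -> X -> R) r O (i : 'I_(mx_n O)) :
  mx_supp O `<=` PX dist r ->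
  (mx_w i)%:num != 0 -> mx_q i setT = 1%E.
Proof. by move=> OP Oi; have [] := OP (mx_q i); first by exists i. Qed.

End mixture.

Section cluster.
Context {d : measure_display} {X : measurableType d} {R : realType}.
Variables (L K : nat) (alpha : 'I_L -> 'I_K) (omega : 'I_L -> {nonneg R})
  (q : 'I_L -> measure X R).

Local Notation cl := (Defs.cluster alpha omega q).
Local Notation Q := (Qk alpha omega q).

Lemma cluster_wE k l :
  (@mx_w _ _ _ (cl k) l)%:num =
  if alpha l == k then (omega l)%:num / barw alpha omega k else 0.
Proof. by rewrite /Defs.cluster /=; case: ifP. Qed.

Lemma cluster_supp k p : mx_supp (cl k) p -> exists2 l, alpha l = k & p = q l.
Proof.
move=> [l wl <-]; exists l => //.
by move: wl; rewrite /= cluster_wE; case: (alpha l =P k) => // _; rewrite eqxx.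
Qed.

(* Same mixture as [cl k], but the atoms of weight 0 are moved to [q l0], so
   that for [k = alpha l0] all atoms lie in the support, as [hconv] demands. *)
Definition cluster_filled k l0 : @mixing d X R :=
  @Mixing _ _ _ L (@mx_w _ _ _ (cl k)) (fun l => if alpha l == k then q l else q l0).

Lemma cluster_filledE k l0 : meq (mixture (cluster_filled k l0)) (Q k).
Proof.
move=> A _; rewrite /Qk !mixtureE; apply: eq_bigr => l _ /=.
by rewrite /Defs.cluster /=; case: ifP => // _; rewrite !mul0e.
Qed.

Hypothesis omega_neq0 : forall l, (omega l)%:num != 0.
Hypothesis q_prob : forall l, q l setT = 1%E.

Lemma barw_gt0 l : 0 < barw alpha omega (alpha l).
Proof.
rewrite /barw (bigD1 l) //= ltr_pwDl ?lt0r ?omega_neq0 ?ge0 //.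
by apply: sumr_ge0 => l' _.
Qed.

Lemma cluster_valid l : mx_valid (cl (alpha l)).
Proof.
rewrite /mx_valid; under eq_bigr do rewrite cluster_wE.
by rewrite -big_mkcond /= -mulr_suml divff // gt_eqF // barw_gt0.
Qed.

Lemma cluster_supp_prob k p : mx_supp (cl k) p -> p setT = 1%E.
Proof. by move=> /cluster_supp [l _ ->]. Qed.

Lemma cluster_supp_atom l : mx_supp (cl (alpha l)) (q l).
Proof.
by exists l => //=; rewrite cluster_wE eqxx mulf_neq0 // invr_eq0 gt_eqF // barw_gt0.
Qed.

Lemma hellinger_le_hdiam_cluster i j : alpha i = alpha j ->
  hellinger (q i) (q j) <= hdiam (cl (alpha i)).
Proof.
move=> ij; rewrite -(hellinger_ext (mixing1E (q i)) (mixing1E (q j))).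
apply: hellinger_le_hdiam; first exact: cluster_supp_prob.
  exact/hconv_mixing1/cluster_supp_atom.
by apply: hconv_mixing1; rewrite ij; exact: cluster_supp_atom.
Qed.

Lemma hellinger_Qk_le_hdiam i : hellinger (Q (alpha i)) (q i) <= hdiam (cl (alpha i)).
Proof.
rewrite -(hellinger_ext (cluster_filledE (alpha i) i) (mixing1E (q i))).
apply: hellinger_le_hdiam; first exact: cluster_supp_prob.
  exists (cluster_filled (alpha i) i); split => //; first exact: cluster_valid.
  by move=> l /=; case: eqP => [<-|_]; exact: cluster_supp_atom.
exact/hconv_mixing1/cluster_supp_atom.
Qed.

Lemma Qk_prob i : Q (alpha i) setT = 1%E.
Proof. by rewrite /Qk mixture_setT ?(cluster_valid i). Qed.

End cluster.

Section eta.
Context {d : measure_display} {X : measurableType d} {R : realType}.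
Variables (L K : nat) (alpha : 'I_L -> 'I_K) (omega : 'I_L -> {nonneg R})
  (q : 'I_L -> measure X R) (gamma : 'I_K -> measure X R).

Local Notation cl := (Defs.cluster alpha omega q).
Local Notation Q := (Qk alpha omega q).
Local Notation eta := (eta_alpha alpha omega q gamma).

Lemma eta_alpha_ge0 : 0 <= eta.
Proof. by rewrite addr_ge0 // bigmax_ge_id. Qed.

Lemma le_eta_alpha i :
  hdiam (cl (alpha i)) + hellinger (gamma (alpha i)) (Q (alpha i)) <= eta.
Proof.
have ai : [exists l, alpha l == alpha i] by apply/existsP; exists i.
have le_max (F : 'I_K -> R) :
    F (alpha i) <= \big[Num.max/0]_(k < K | [exists l, alpha l == k]) F k.
  exact: (@le_bigmax_cond _ _ _ 0 (alpha i) (fun k => [exists l, alpha l == k]) F ai).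
by apply: lerD; apply: le_max.
Qed.

Hypothesis omega_neq0 : forall l, (omega l)%:num != 0.
Hypothesis q_prob : forall l, q l setT = 1%E.

Lemma hellinger_le_eta i j : alpha i = alpha j -> hellinger (q i) (q j) <= eta.
Proof.
move=> ij; apply: le_trans (le_eta_alpha i); rewrite ler_wpDr ?hellinger_ge0 //.
exact: hellinger_le_hdiam_cluster.
Qed.

Hypothesis gamma_fin : forall k, (gamma k setT < +oo)%E.

Lemma hellinger_gamma_le i (p : measure X R) : (p setT < +oo)%E ->
  hellinger (gamma (alpha i)) p <= eta + hellinger (q i) p.
Proof.
have Qfin : (Q (alpha i) setT < +oo)%E.
  by rewrite (Qk_prob alpha omega_neq0 q_prob i) ltry.
have qfin : (q i setT < +oo)%E by rewrite q_prob ltry.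
move=> poo; apply: le_trans (hellinger_triangle (gamma_fin _) Qfin poo) _.
apply: le_trans (lerD (lexx _) (hellinger_triangle Qfin qfin poo)) _.
rewrite addrA lerD2r; apply: le_trans (le_eta_alpha i); rewrite addrC lerD2r.
exact: hellinger_Qk_le_hdiam.
Qed.

Lemma hellinger_gamma_gamma_le i j :
  hellinger (gamma (alpha i)) (gamma (alpha j)) <= 2 * eta + hellinger (q i) (q j).
Proof.
have qj := hellinger_gamma_le j (_ : q i setT < +oo)%E.
rewrite hellingerC [hellinger (q j) _]hellingerC q_prob ltry in qj.
apply: le_trans (hellinger_gamma_le i (gamma_fin (alpha j))) _.
by apply: le_trans (lerD (lexx eta) (qj isT)) _; rewrite addrA -mulr2n mulr_natl.
Qed.

End eta.

(* The zero-weight components of Lambda need not be probability measures. *)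
Lemma separated_lty {d : measure_display} {X : measurableType d} {R : realType}
    (K : nat) (gamma : 'I_K -> measure X R) (delta : R) (k0 : 'I_K) :
  0 <= delta -> delta_separated gamma delta -> (gamma k0 setT < +oo)%E ->
  forall k, (gamma k setT < +oo)%E.
Proof.
move=> delta0 sep k0oo k; have [->|kk0] := eqVneq k k0; first by [].
rewrite ltey; apply/eqP => koo.
by have := sep _ _ kk0; rewrite hellinger_pinfty // ltNge delta0.
Qed.

Lemma single_linkage_eq {R : realType} (L : nat) (D : 'I_L -> 'I_L -> R) (t : R)
    (U : eqType) (f : 'I_L -> U) :
  (forall i j, (D i j <= t) = (f i == f j)) ->
  single_linkage D t =2 (fun i j => f i == f j).
Proof.
move=> Df i j; rewrite /single_linkage (eq_connect Df).
apply/idP/idP => [|fij]; last exact: connect1.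
have closed_fi : closed_mem (fun a b => f a == f b) (mem [pred k | f k == f i]).
  by move=> a b /eqP ab; rewrite !inE ab.
by move/(closed_connect closed_fi); rewrite !inE eqxx eq_sym => <-.
Qed.

Theorem proposition1
  (d : measure_display) (X : measurableType d) (R : realType)
  (dist : X -> X -> R) (r : R)
  (Hdist : is_metric dist) (Hborel : is_borel dist) (Hr : 0 < r)
  (Qfam : set (@mixing d X R))
  (HQinv : forall O O', mix_equiv O O' -> Qfam O -> Qfam O')
  (Hident : forall L : nat, identifiable dist r Qfam L)
  (K : nat) (lambda : 'I_K -> {nonneg R}) (gamma : 'I_K -> measure X R)
  (HLambda : P2 dist r K (Mixing lambda gamma))
  (L : nat) (HLK : (K <= L)%N)
  (omega : 'I_L -> {nonneg R}) (q : 'I_L -> measure X R)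
  (Hatoms : forall l, (omega l)%:num != 0)
  (Hproj : TL dist r Qfam L (mixture (Mixing lambda gamma))
                                  (mixture (Mixing omega q)))
  (Huniq : forall P, TL dist r Qfam L (mixture (Mixing lambda gamma)) P ->
                     meq P (mixture (Mixing omega q)))
  (HOmega : fam_L dist r Qfam L (Mixing omega q))
  (alpha : 'I_L -> 'I_K)
  (Hsep : delta_separated gamma (4 * eta_alpha alpha omega q gamma)) :
  let e := eta_alpha alpha omega q gamma in
  [/\ forall i j : 'I_L, alpha i = alpha j <-> hellinger (q i) (q j) <= e,
      forall i j : 'I_L, alpha i <> alpha j -> 2 * e <= hellinger (q i) (q j),
      0 < e -> forall i j : 'I_L,
                 alpha i <> alpha j <-> 2 * e <= hellinger (q i) (q j) &
      exists t : R, forall i j : 'I_L,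
        single_linkage (fun a b => hellinger (q a) (q b)) t i j = (alpha i == alpha j)].
Proof.
move=> e; rewrite -/e in Hsep.
have [_ [_ Omega_supp _]] := HOmega.
have q_prob l : q l setT = 1%E by apply: mx_supp_prob Omega_supp (Hatoms l).
have [Lambda_valid Lambda_supp _] := HLambda.
have [k0 lambda_k0] := mixing_atom Lambda_valid.
have gamma_fin : forall k, (gamma k setT < +oo)%E.
  have gamma_k0 : gamma k0 setT = 1%E := mx_supp_prob Lambda_supp lambda_k0.
  apply: (separated_lty (k0 := k0) _ Hsep); last by rewrite gamma_k0 ltry.
  by rewrite mulr_ge0 ?eta_alpha_ge0.
have close i j : alpha i = alpha j -> hellinger (q i) (q j) <= e.
  exact: hellinger_le_eta.
have far i j : alpha i <> alpha j -> 2 * e < hellinger (q i) (q j).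
  move=> /eqP ij; have := Hsep _ _ ij.
  have := hellinger_gamma_gamma_le alpha Hatoms q_prob gamma_fin i j.
  by rewrite -/e; lra.
have sameP i j : alpha i = alpha j <-> hellinger (q i) (q j) <= e.
  split=> [|h]; first exact: close.
  apply: contrapT => /far; have := eta_alpha_ge0 alpha omega q gamma.
  by rewrite -/e; lra.
split=> [//|i j /far/ltW //|e_gt0 i j|].
- by split=> [/far/ltW //|h /close]; lra.
exists e => i j; apply: single_linkage_eq => a b.
by apply/idP/eqP => /sameP.
Qed.
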